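(* Assume the setting described in the context, let $\delta=\sum_{k=1}^{L-1}\ell_k(\ell_{k-1}+1)$, let $\theta=(\theta_j)_{j\in\mathbb N\cap[0,\delta]}$ be a function from $\mathbb N\cap[0,\delta]$ to $\mathbb R$, and let $\mathbb L\colon\mathbb R^{\ell_L(\ell_{L-1}+1)}\to\mathbb R$ satisfy for all $v=(v_1,\dots,v_{\ell_L(\ell_{L-1}+1)})$ that $\mathbb L(v)=\mathcal L_\infty(\theta_1,\theta_2,\dots,\theta_\delta,v_1,v_2,\dots,v_{\ell_L(\ell_{L-1}+1)})$. Then for all $v,w\in\mathbb R^{\ell_L(\ell_{L-1}+1)}$, $\lambda\in[0,1]$ it holds that $\mathbb L(\lambda v+(1-\lambda)w)\le\lambda\mathbb L(v)+(1-\lambda)\mathbb L(w)$.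
   Context: Setting. Let $L,\mathfrak d\in\mathbb N=\{1,2,\dots\}$, $(\ell_k)_{k\in\mathbb N_0}\subseteq\mathbb N$, $a\in\mathbb R$, $b\in(a,\infty)$ with $\mathfrak d=\sum_{k=1}^L\ell_k(\ell_{k-1}+1)$; let $\mathbf d_k=\sum_{h=1}^k\ell_h(\ell_{h-1}+1)$ for $k\in\mathbb N_0$. For $\theta=(\theta_1,\dots,\theta_{\mathfrak d})\in\mathbb R^{\mathfrak d}$, $k\in\{1,\dots,L\}$, $i\in\{1,\dots,\ell_k\}$, $j\in\{1,\dots,\ell_{k-1}\}$ let $\mathfrak w^{k,\theta}_{i,j}=\theta_{(i-1)\ell_{k-1}+j+\mathbf d_{k-1}}$ and $\mathfrak b^{k,\theta}_i=\theta_{\ell_k\ell_{k-1}+i+\mathbf d_{k-1}}$, let $\mathfrak w^{k,\theta}=(\mathfrak w^{k,\theta}_{i,j})_{i,j}\in\mathbb R^{\ell_k\times\ell_{k-1}}$, $\mathfrak b^{k,\theta}=(\mathfrak b^{k,\theta}_1,\dots,\mathfrak b^{k,\theta}_{\ell_k})\in\mathbb R^{\ell_k}$, and $\mathcal A^\theta_k(x)=\mathfrak b^{k,\theta}+\mathfrak w^{k,\theta}x$. Let $\mathfrak M_\infty(x_1,\dots,x_n)=(\max\{x_1,0\},\dots,\max\{x_n,0\})$ and $\|\cdot\|$ the Euclidean norm. Define $\mathcal N^{k,\theta}_\infty\colon\mathbb R^{\ell_0}\to\mathbb R^{\ell_k}$, $k\in\{1,\dots,L\}$, by $\mathcal N^{1,\theta}_\infty=\mathcal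 A^\theta_1$ and $\mathcal N^{k+1,\theta}_\infty(x)=\mathcal A^\theta_{k+1}(\mathfrak M_\infty(\mathcal N^{k,\theta}_\infty(x)))$. Let $\mu$ be a measure on the Borel $\sigma$-algebra of $[a,b]^{\ell_0}$ with $\mu([a,b]^{\ell_0})\in\mathbb R$, let $f\colon[a,b]^{\ell_0}\to\mathbb R^{\ell_L}$ be measurable, and let $\mathcal L_\infty\colon\mathbb R^{\mathfrak d}\to\mathbb R$, $\mathcal L_\infty(\theta)=\int_{[a,b]^{\ell_0}}\|\mathcal N^{L,\theta}_\infty(x)-f(x)\|^2\,\mu(dx)$ (these integrals are real numbers as part of the setting). *)

From HB Require Import structures.
From mathcomp Require Import all_boot all_order all_algebra.
From mathcomp Require Import all_classical all_reals all_analysis.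
Set Implicit Arguments. Unset Strict Implicit. Unset Printing Implicit Defensive.
Import Order.TTheory GRing.Theory Num.Theory.
Local Open Scope ring_scope.

(* Conventions: parameter indices are 0-based (paper index j <-> Rocq j-1).   *)

Definition dsum (l : nat -> nat) (k : nat) : nat :=
  (\sum_(1 <= h < k.+1) l h * (l h.-1 + 1))%N.

(* k-th entry (0-based) of a row vector, 0 outside the range *)
Definition vat (R : realType) (n : nat) (v : 'rV[R]_n) (k : nat) : R :=
  if @insub nat (fun i => i < n)%N 'I_n k is Some i then v 0 i else 0.

Definition affine (R : realType) (l : nat -> nat) (th : nat -> R) (k : nat)
    (x : 'cV[R]_(l k)) : 'cV[R]_(l k.+1) :=
  \col_(i < l k.+1)
    (th (l k.+1 * l k + i + dsum l k)%N
     + \sum_(j < l k) th (i * l k + j + dsum l k)%N * x j 0).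

Definition relu (R : realType) (n : nat) (x : 'cV[R]_n) : 'cV[R]_n :=
  \col_i Num.max (x i 0) 0.

Fixpoint netN (R : realType) (l : nat -> nat) (th : nat -> R) (k : nat)
    (x : 'cV[R]_(l 0)) : 'cV[R]_(l k) :=
  match k with
  | 0 => x
  | k'.+1 => @affine R l th k'
      (if k' == 0%N then @netN R l th k' x else relu (@netN R l th k' x))
  end.

Definition sqnorm (R : realType) (n : nat) (y : 'cV[R]_n) : R :=
  \sum_(i < n) y i 0 ^+ 2.

(* the cube [a,b]^{l0} inside R^{l0} = l0.-tuple R (product = Borel sigma-algebra) *)
Definition cube (R : realType) (n : nat) (a b : R) : set (n.-tuple R) :=
  [set x | forall i : 'I_n, a <= tnth x i <= b].

Definition colv (R : realType) (n : nat) (x : n.-tuple R) : 'cV[R]_n :=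
  \col_i tnth x i.

Definition loss_int (R : realType) (l : nat -> nat) (L : nat) (a b : R)
    (mu : {measure set ((l 0).-tuple R) -> \bar R})
    (f : (l 0).-tuple R -> 'cV[R]_(l L)) (th : 'rV[R]_(dsum l L)) : \bar R :=
  (\int[mu]_(x in cube a b) (sqnorm (@netN R l (vat th) L (colv x) - f x))%:E)%E.

Definition Linf (R : realType) (l : nat -> nat) (L : nat) (a b : R)
    (mu : {measure set ((l 0).-tuple R) -> \bar R})
    (f : (l 0).-tuple R -> 'cV[R]_(l L)) (th : 'rV[R]_(dsum l L)) : R :=
  fine (loss_int a b mu f th).

Definition concat_params (R : realType) (l : nat -> nat) (L : nat)
    (th : 'rV[R]_(dsum l L.-1)) (v : 'rV[R]_(l L * (l L.-1 + 1))) :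
    'rV[R]_(dsum l L) :=
  \row_(i < dsum l L)
    (if (i < dsum l L.-1)%N then vat th i else vat v (i - dsum l L.-1)).

From HB Require Import structures.
From mathcomp Require Import all_boot all_order all_algebra.
From mathcomp Require Import all_classical all_reals all_analysis.
From mathcomp Require Import measurable_realfun.
From mathcomp Require Import zify ring.
Import Order.TTheory GRing.Theory Num.Theory.
Local Open Scope ring_scope.
Local Open Scope classical_set_scope.

(* With the first L-1 layers frozen, the realization is the last affine layer
   applied to a hidden vector that does not depend on v, and that layer is
   affine in v.  Hence the pointwise squared error is convex in v, and
   integrating against a positive measure preserves convexity. *)

Section ConvexIntegral.
Context d (T : measurableType d) (R : realType) (mu : {measure set T -> \bar R}).
Variables (D : set T) (F g h : T -> R) (lam : R).
Hypotheses (mD : measurable D) (lam01 : 0 <= lam <= 1).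
Hypotheses (mF : measurable_fun D F) (mg : measurable_fun D g)
  (mh : measurable_fun D h).
Hypotheses (F0 : forall x, D x -> 0 <= F x) (g0 : forall x, D x -> 0 <= g x)
  (h0 : forall x, D x -> 0 <= h x).
Hypothesis F_le : forall x, D x -> F x <= lam * g x + (1 - lam) * h x.

Lemma ge0_integral_le_convex_comb :
  (\int[mu]_(x in D) (F x)%:E <=
   lam%:E * \int[mu]_(x in D) (g x)%:E
   + (1 - lam)%:E * \int[mu]_(x in D) (h x)%:E)%E.
Proof.
have [lam0 lam1] := andP lam01.
have mgE : measurable_fun D (EFin \o g) by exact/measurable_EFinP.
have mhE : measurable_fun D (EFin \o h) by exact/measurable_EFinP.
have g0E x : D x -> (0 <= (g x)%:E)%E by move=> Dx; rewrite lee_fin g0.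
have h0E x : D x -> (0 <= (h x)%:E)%E by move=> Dx; rewrite lee_fin h0.
rewrite -(ge0_integralZl mu mD mgE g0E) ?lee_fin //.
rewrite -(ge0_integralZl mu mD mhE h0E) ?lee_fin ?subr_ge0 //.
rewrite -ge0_integralD //; last 4 first.
- by move=> x Dx; rewrite /= -EFinM lee_fin mulr_ge0 ?g0.
- exact: emeasurable_funM.
- by move=> x Dx; rewrite /= -EFinM lee_fin mulr_ge0 ?subr_ge0 ?h0.
- exact: emeasurable_funM.
apply: ge0_le_integral => //.
- exact/measurable_EFinP.
- by apply: emeasurable_funD; exact: emeasurable_funM.
Qed.

Lemma fine_integral_le_convex_comb :
  (\int[mu]_(x in D) (g x)%:E < +oo)%E ->
  (\int[mu]_(x in D) (h x)%:E < +oo)%E ->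
  fine (\int[mu]_(x in D) (F x)%:E) <=
  lam * fine (\int[mu]_(x in D) (g x)%:E)
  + (1 - lam) * fine (\int[mu]_(x in D) (h x)%:E).
Proof.
move=> gfin hfin.
have int_fin (u : T -> R) : (forall x, D x -> 0 <= u x) ->
    (\int[mu]_(x in D) (u x)%:E < +oo)%E ->
    (\int[mu]_(x in D) (u x)%:E = (fine (\int[mu]_(x in D) (u x)%:E))%:E)%E.
  move=> u0 ufin; rewrite fineK // ge0_fin_numE //.
  by apply: integral_ge0 => x Dx; rewrite lee_fin u0.
have := ge0_integral_le_convex_comb.
rewrite [in X in (_ <= X)%E](int_fin g) // [in X in (_ <= X)%E](int_fin h) //.
rewrite -!EFinM -EFinD => Fle.
have Ffin : (\int[mu]_(x in D) (F x)%:E < +oo)%E by exact: le_lt_trans Fle (ltry _).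
by rewrite -lee_fin -int_fin.
Qed.

End ConvexIntegral.

Lemma dsumS l k : dsum l k.+1 = (dsum l k + l k.+1 * (l k + 1))%N.
Proof. by rewrite /dsum big_nat_recr. Qed.

Lemma leq_dsum_pred l k : (dsum l k.-1 <= dsum l k)%N.
Proof. by case: k => [|k] //=; rewrite dsumS leq_addr. Qed.

Section Realization.
Context {R : realType} {l : nat -> nat}.

Lemma eq_netN (p q : nat -> R) k x :
  (forall j, (j < dsum l k)%N -> p j = q j) ->
  @netN R l p k x = @netN R l q k x.
Proof.
elim: k => [//|k IH] pq /=.
rewrite IH => [|j jk]; last by apply: pq; rewrite dsumS ltn_addr.
apply/matrixP => i j; rewrite !mxE.
have weight_lt (m : 'I_(l k)) : (i * l k + m < l k.+1 * l k)%N.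
  apply: leq_trans (leq_mul (ltn_ord i) (leqnn _)).
  by rewrite mulSn addnC -addSn leq_add2r.
rewrite pq; last by rewrite dsumS; have := ltn_ord i; nia.
congr (_ + _); apply: eq_bigr => m _; rewrite pq // dsumS.
by have := weight_lt m; lia.
Qed.

Lemma affine_lincomb (p q : nat -> R) (s t : R) k y :
  @affine R l (fun j => s * p j + t * q j) k y
  = s *: @affine R l p k y + t *: @affine R l q k y.
Proof.
apply/matrixP => i j; rewrite !mxE.
under eq_bigr do rewrite mulrDl -!mulrA.
by rewrite big_split /= -!mulr_sumr; ring.
Qed.

Lemma netN_convex_comb (p q : nat -> R) lam k x :
  (forall j, (j < dsum l k)%N -> p j = q j) ->
  @netN R l (fun j => lam * p j + (1 - lam) * q j) k.+1 x
  = lam *: @netN R l p k.+1 x + (1 - lam) *: @netN R l q k.+1 x.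
Proof.
move=> pq /=.
rewrite (@eq_netN q p) => [|j jk]; last by rewrite pq.
rewrite (@eq_netN (fun j => lam * p j + (1 - lam) * q j) p) => [|j jk].
  exact: affine_lincomb.
by rewrite pq //; ring.
Qed.

Lemma measurable_netN (p : nat -> R) k (i : 'I_(l k)) :
  measurable_fun setT (fun x : (l 0).-tuple R => @netN R l p k (colv x) i 0).
Proof.
elim: k i => [|k IH] i /=.
  by under eq_fun do rewrite mxE; exact: measurable_tnth.
under eq_fun do rewrite mxE.
apply: measurable_funD => //; apply: measurable_sum => j.
apply: measurable_funM => //; case: (k == 0%N) => //.
by under eq_fun do rewrite mxE; exact: measurable_maxr.
Qed.

End Realization.

Lemma vat_lincomb (R : realType) n (v w : 'rV[R]_n) (s t : R) k :
  vat (s *: v + t *: w) k = s * vat v k + t * vat w k.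
Proof.
rewrite /vat; case: insubP => [i _ _|_]; first by rewrite !mxE.
by rewrite !mulr0 addr0.
Qed.

Section ConcatParams.
Context {R : realType} {l : nat -> nat} {L : nat} (th : 'rV[R]_(dsum l L.-1)).

Lemma vat_concat_params v k :
  vat (concat_params th v) k =
  if (k < dsum l L)%N then
    (if (k < dsum l L.-1)%N then vat th k else vat v (k - dsum l L.-1))
  else 0.
Proof.
rewrite /vat; case: insubP => [i -> iE|/negbTE -> //].
by rewrite mxE iE.
Qed.

Lemma vat_concat_params_prefix v w j : (j < dsum l L.-1)%N ->
  vat (concat_params th v) j = vat (concat_params th w) j.
Proof.
move=> jL; have jL' := leq_trans jL (leq_dsum_pred l L).
by rewrite !vat_concat_params jL jL'.
Qed.

Lemma vat_concat_params_convex_comb v w lam :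
  vat (concat_params th (lam *: v + (1 - lam) *: w))
  = fun j => lam * vat (concat_params th v) j
             + (1 - lam) * vat (concat_params th w) j.
Proof.
apply: funext => j; rewrite !vat_concat_params.
case: ifP => _; last by ring.
by case: ifP => _; [ring | exact: vat_lincomb].
Qed.

End ConcatParams.

Lemma sqr_convex (R : realDomainType) (lam x y : R) : 0 <= lam <= 1 ->
  (lam * x + (1 - lam) * y) ^+ 2 <= lam * x ^+ 2 + (1 - lam) * y ^+ 2.
Proof.
case/andP=> lam0 lam1; rewrite -subr_ge0.
have -> : lam * x ^+ 2 + (1 - lam) * y ^+ 2 - (lam * x + (1 - lam) * y) ^+ 2
  = lam * (1 - lam) * (x - y) ^+ 2 by ring.
by rewrite mulr_ge0 ?sqr_ge0 // mulr_ge0 ?subr_ge0.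
Qed.

Lemma sqnorm_ge0 (R : realType) n (y : 'cV[R]_n) : 0 <= sqnorm y.
Proof. by apply: sumr_ge0 => i _; exact: sqr_ge0. Qed.

Lemma sqnorm_convex (R : realType) n (y z c : 'cV[R]_n) lam : 0 <= lam <= 1 ->
  sqnorm (lam *: y + (1 - lam) *: z - c) <=
  lam * sqnorm (y - c) + (1 - lam) * sqnorm (z - c).
Proof.
move=> lam01; rewrite /sqnorm !mulr_sumr -big_split /=.
apply: ler_sum => i _; rewrite !mxE.
have -> : lam * y i 0 + (1 - lam) * z i 0 - c i 0
  = lam * (y i 0 - c i 0) + (1 - lam) * (z i 0 - c i 0) by ring.
exact: sqr_convex.
Qed.

Lemma measurable_cube (R : realType) n (a b : R) : measurable (@cube R n a b).
Proof.
have -> : cube a b =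
    \bigcap_(i in [set: 'I_n]) ((fun x : n.-tuple R => tnth x i) @^-1` `[a, b]).
  apply/seteqP; split => x /=.
    by move=> xab i _ /=; rewrite in_itv /= xab.
  by move=> xab i; have := xab i I; rewrite /= in_itv.
apply: fin_bigcap_measurable => // i _.
by rewrite -[X in measurable X]setTI; exact: measurable_tnth.
Qed.

Lemma measurable_sqloss (R : realType) l L (a b : R) (p : nat -> R)
    (f : (l 0).-tuple R -> 'cV[R]_(l L)) :
  (forall j : 'I_(l L), measurable_fun (cube a b) (fun x => f x j 0)) ->
  measurable_fun (cube a b) (fun x => sqnorm (@netN R l p L (colv x) - f x)).
Proof.
move=> mf; apply: measurable_sum => i; apply: measurable_funX.
under eq_fun do rewrite !mxE.
apply: measurable_funB (mf i).
exact: measurable_funS measurableT (@subsetT _ _) (measurable_netN p _ i).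
Qed.

Theorem proposition2p15 (R : realType) (L : nat) (l : nat -> nat) (a b : R)
  (mu : {measure set ((l 0).-tuple R) -> \bar R})
  (f : (l 0).-tuple R -> 'cV[R]_(l L))
  (th : 'rV[R]_(dsum l L.-1))
  (LL : 'rV[R]_(l L * (l L.-1 + 1)) -> R) :
  (0 < L)%N ->
  (forall k, (0 < l k)%N) ->
  a < b ->
  (mu (cube a b) < +oo)%E ->
  (forall j : 'I_(l L), measurable_fun (cube a b) (fun x => f x j 0)) ->
  (forall p : 'rV[R]_(dsum l L), (loss_int a b mu f p < +oo)%E) ->
  (forall v, LL v = Linf a b mu f (concat_params th v)) ->
  forall (v w : 'rV[R]_(l L * (l L.-1 + 1))) (lam : R),
    0 <= lam <= 1 ->
    LL (lam *: v + (1 - lam) *: w) <= lam * LL v + (1 - lam) * LL w.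
Proof.
case: L f th LL => [//|L] f th LL _ _ _ _ mf loss_fin LLE v w lam lam01.
rewrite !LLE /Linf /loss_int vat_concat_params_convex_comb.
apply: fine_integral_le_convex_comb => //.
- exact: measurable_cube.
- exact: measurable_sqloss.
- exact: measurable_sqloss.
- exact: measurable_sqloss.
- by move=> x _; exact: sqnorm_ge0.
- by move=> x _; exact: sqnorm_ge0.
- by move=> x _; exact: sqnorm_ge0.
- move=> x _; rewrite netN_convex_comb; first exact: sqnorm_convex.
  by move=> j; exact: (@vat_concat_params_prefix _ _ L.+1).
- exact: loss_fin.
- exact: loss_fin.
Qed.
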